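(* For every $n\ge1$, the coordinates $(p_j,u_j)$ of the trajectory $T_n$ satisfy: (a) $p_ju_j<1$ for $0\le j\le n$; (b) $p_j\ge1$ for $0\le j\le (n-1)/2$, and $u_j\ge1$ for $(n+1)/2\le j\le n$; (c) $u_j<1$ for $0\le j\le n/2$, and $p_j<1$ for $n/2\le j\le n$.
   Context: $\Phi$ is the partial map of $\mathbb{R}^2$ defined for $p\ne0$ by $\Phi(p,u)=\bigl(p^2(u+1)-1,\ 1/p\bigr)$. For $n\ge1$, the trajectory $T_n$ is the (existing and unique) finite sequence $(p_j,u_j)$, $j=0,\dots,n$, with $(p_j,u_j)=\Phi(p_{j-1},u_{j-1})$ for $1\le j\le n$, $u_0=0$, $p_n=0$, and $p_j>0$ for $0\le j\le n-1$. *)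

From Stdlib Require Import Reals Lra Lia.
Open Scope R_scope.

Definition Phi (pu : R * R) : R * R :=
  let (p, u) := pu in (p ^ 2 * (u + 1) - 1, / p).

Definition is_trajectory (n : nat) (p u : nat -> R) : Prop :=
  u 0%nat = 0 /\
  p n = 0 /\
  (forall j : nat, (j <= n - 1)%nat -> 0 < p j) /\
  (forall j : nat, (1 <= j <= n)%nat -> (p j, u j) = Phi (p (j - 1)%nat, u (j - 1)%nat)).

(** Along a trajectory the quantity [w = p u] evolves by [w' = w + p - 1/p].
    The region [{p >= 1, w >= 1}] is forward invariant and the region
    [{p < 1, w >= 1}] is backward invariant, so neither meets a trajectory that
    starts at [w = 0] and ends at [p = 0]; hence [w < 1], which says exactly
    that [p] decreases strictly.  The same monotonicity, compared between two
    trajectories, shows that [T_n] is unique; since the reversed sequence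
    [(u_(n-j), p_(n-j))] is again a trajectory, [u_j = p_(n-j)] and therefore
    [p_j p_(n-1-j) = 1].  With [p] decreasing this pins [p_j] on the correct
    side of [1], and the bounds on [u] are the reflected bounds on [p]. *)

From Stdlib Require Import Reals Lra Lia.
Open Scope R_scope.

Section Trajectory.

Context {n : nat} {p u : nat -> R} (T : is_trajectory n p u).

Lemma trajectory_succ k : (k < n)%nat ->
  p (S k) = p k ^ 2 * (u k + 1) - 1 /\ u (S k) = / p k.
Proof.
  intros Hk. destruct T as [_ [_ [_ Hstep]]].
  specialize (Hstep (S k) ltac:(lia)).
  replace (S k - 1)%nat with k in Hstep by lia.
  injection Hstep; auto.
Qed.

Lemma trajectory_p_succ k : (k < n)%nat -> p (S k) = p k ^ 2 * (u k + 1) - 1.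
Proof. intros Hk. exact (proj1 (trajectory_succ k Hk)). Qed.

Lemma trajectory_u_succ k : (k < n)%nat -> u (S k) = / p k.
Proof. intros Hk. exact (proj2 (trajectory_succ k Hk)). Qed.

Lemma trajectory_p_gt0 k : (k < n)%nat -> 0 < p k.
Proof. intros Hk. destruct T as [_ [_ [Hpos _]]]. apply Hpos; lia. Qed.

Lemma trajectory_u_ge0 k : (k <= n)%nat -> 0 <= u k.
Proof.
  intros Hk. destruct k as [|k].
  - destruct T as [H0 _]. lra.
  - rewrite trajectory_u_succ by lia.
    left; apply Rinv_0_lt_compat, trajectory_p_gt0; lia.
Qed.

Lemma trajectory_pu_succ k : (k < n)%nat ->
  p (S k) * u (S k) = p k * u k + p k - / p k.
Proof.
  intros Hk. rewrite trajectory_p_succ, trajectory_u_succ by exact Hk.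
  pose proof (trajectory_p_gt0 k Hk). field. lra.
Qed.

Lemma trajectory_forward_invariant k : (k < n)%nat ->
  1 <= p k -> 1 <= p k * u k -> 1 <= p (S k) /\ 1 <= p (S k) * u (S k).
Proof.
  intros Hk Hp Hw.
  assert (Hinv : / p k <= 1) by (rewrite <- Rinv_1; apply Rinv_le_contravar; lra).
  rewrite trajectory_pu_succ, trajectory_p_succ by exact Hk.
  split; nra.
Qed.

Lemma trajectory_backward_invariant k : (k < n)%nat ->
  p (S k) < 1 -> 1 <= p (S k) * u (S k) -> p k < 1 /\ 1 <= p k * u k.
Proof.
  intros Hk Hp Hw.
  pose proof (trajectory_p_gt0 k Hk) as Hpos.
  assert (Hle : p k <= p (S k)).
  { rewrite trajectory_u_succ in Hw by exact Hk.
    apply Rmult_le_compat_r with (r := p k) in Hw; [|lra].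
    rewrite Rmult_assoc, Rinv_l in Hw; lra. }
  assert (Hinv : 1 < / p k) by (rewrite <- Rinv_1; apply Rinv_lt_contravar; lra).
  rewrite trajectory_pu_succ in Hw by exact Hk.
  split; lra.
Qed.

Lemma trajectory_not_p_ge1_pu_ge1 k : (k <= n)%nat ->
  1 <= p k -> 1 <= p k * u k -> False.
Proof.
  remember (n - k)%nat as d eqn:Hd. revert k Hd.
  induction d as [|d IH]; intros k Hd Hk Hp Hw.
  - replace k with n in Hp by lia. destruct T as [_ [Hn _]]. lra.
  - destruct (trajectory_forward_invariant k ltac:(lia) Hp Hw).
    apply (IH (S k)); lia || lra.
Qed.

Lemma trajectory_not_p_lt1_pu_ge1 k : (k <= n)%nat ->
  p k < 1 -> 1 <= p k * u k -> False.
Proof.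
  induction k as [|k IH]; intros Hk Hp Hw.
  - destruct T as [H0 _]. rewrite H0 in Hw. lra.
  - destruct (trajectory_backward_invariant k ltac:(lia) Hp Hw).
    apply IH; lia || lra.
Qed.

Lemma trajectory_pu_lt1 k : (k <= n)%nat -> p k * u k < 1.
Proof.
  intros Hk. destruct (Rlt_or_le (p k * u k) 1) as [|Hw]; [assumption|exfalso].
  destruct (Rlt_or_le (p k) 1).
  - exact (trajectory_not_p_lt1_pu_ge1 k Hk ltac:(assumption) Hw).
  - exact (trajectory_not_p_ge1_pu_ge1 k Hk ltac:(assumption) Hw).
Qed.

Lemma trajectory_p_succ_lt k : (k < n)%nat -> p (S k) < p k.
Proof.
  intros Hk. pose proof (trajectory_pu_lt1 (S k) ltac:(lia)) as Hw.
  rewrite trajectory_u_succ in Hw by exact Hk.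
  pose proof (trajectory_p_gt0 k Hk).
  apply Rmult_lt_compat_r with (r := p k) in Hw; [|lra].
  rewrite Rmult_assoc, Rinv_l in Hw; lra.
Qed.

Lemma trajectory_p_lt a b : (a < b)%nat -> (b <= n)%nat -> p b < p a.
Proof.
  induction 1 as [|b Hab IH]; intros Hb.
  - apply trajectory_p_succ_lt; lia.
  - pose proof (trajectory_p_succ_lt b ltac:(lia)). specialize (IH ltac:(lia)). lra.
Qed.

Lemma trajectory_p_le a b : (a <= b)%nat -> (b <= n)%nat -> p b <= p a.
Proof.
  intros Hab Hb. destruct (Nat.eq_dec a b) as [->|Hne]; [lra|].
  left; apply trajectory_p_lt; lia.
Qed.

End Trajectory.

(* A larger starting value [p_0] stays larger, with a larger [p u], all the way
   to [j = n]; so two trajectories cannot both end at [p_n = 0]. *)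
Lemma trajectory_p0_lt_false n p u q v :
  is_trajectory n p u -> is_trajectory n q v -> p 0%nat < q 0%nat -> False.
Proof.
  intros Tp Tq Hlt.
  assert (Hcmp : forall j, (j <= n)%nat -> p j < q j /\ p j * u j <= q j * v j).
  { induction j as [|j IH]; intros Hj.
    - destruct Tp as [Hu _], Tq as [Hv _]. rewrite Hu, Hv. lra.
    - destruct (IH ltac:(lia)) as [Hpq Hw].
      pose proof (trajectory_p_gt0 Tp j ltac:(lia)).
      pose proof (trajectory_u_ge0 Tp j ltac:(lia)).
      assert (/ q j < / p j) by (apply Rinv_lt_contravar; nra).
      rewrite (trajectory_pu_succ Tp), (trajectory_pu_succ Tq),
        (trajectory_p_succ Tp), (trajectory_p_succ Tq) by lia.
      replace (p j ^ 2 * (u j + 1) - 1) with (p j * (p j * u j) + p j * p j - 1) by ring.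
      replace (q j ^ 2 * (v j + 1) - 1) with (q j * (q j * v j) + q j * q j - 1) by ring.
      assert (0 <= p j * u j) by nra.
      split; nra. }
  destruct (Hcmp n ltac:(lia)) as [Hn _].
  destruct Tp as [_ [Hp _]], Tq as [_ [Hq _]]. lra.
Qed.

Lemma trajectory_unique n p u q v :
  is_trajectory n p u -> is_trajectory n q v ->
  forall j, (j <= n)%nat -> p j = q j /\ u j = v j.
Proof.
  intros Tp Tq.
  induction j as [|j IH]; intros Hj.
  - split.
    + destruct (Rtotal_order (p 0%nat) (q 0%nat)) as [Hlt|[Heq|Hgt]].
      * destruct (trajectory_p0_lt_false _ _ _ _ _ Tp Tq Hlt).
      * exact Heq.
      * destruct (trajectory_p0_lt_false _ _ _ _ _ Tq Tp Hgt).
    + destruct Tp as [Hu _], Tq as [Hv _]. congruence.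
  - destruct (IH ltac:(lia)) as [Hpq Huv].
    rewrite (trajectory_p_succ Tp), (trajectory_p_succ Tq),
      (trajectory_u_succ Tp), (trajectory_u_succ Tq), Hpq, Huv by lia.
    split; reflexivity.
Qed.

Lemma trajectory_rev n p u : (1 <= n)%nat -> is_trajectory n p u ->
  is_trajectory n (fun j => u (n - j)%nat) (fun j => p (n - j)%nat).
Proof.
  intros Hn T. split; [|split; [|split]].
  - rewrite Nat.sub_0_r. destruct T as [_ [Hp _]]. exact Hp.
  - rewrite Nat.sub_diag. destruct T as [Hu _]. exact Hu.
  - intros j Hj. replace (n - j)%nat with (S (n - S j)) by lia.
    rewrite (trajectory_u_succ T) by lia.
    apply Rinv_0_lt_compat, (trajectory_p_gt0 T); lia.
  - intros j Hj. unfold Phi.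
    replace (n - (j - 1))%nat with (S (n - j)) by lia.
    pose proof (trajectory_p_gt0 T (n - j) ltac:(lia)).
    rewrite (trajectory_p_succ T), (trajectory_u_succ T) by lia.
    f_equal; [field; lra | now rewrite Rinv_inv].
Qed.

Section Reflection.

Context {n : nat} {p u : nat -> R} (Hn : (1 <= n)%nat) (T : is_trajectory n p u).

Lemma trajectory_u_reflect j : (j <= n)%nat -> u j = p (n - j)%nat.
Proof.
  intros Hj.
  exact (proj2 (trajectory_unique _ _ _ _ _ T (trajectory_rev n p u Hn T) j Hj)).
Qed.

Lemma trajectory_p_mul_reflect j : (j < n)%nat -> p j * p (n - 1 - j)%nat = 1.
Proof.
  intros Hj.
  assert (Hpj : p j = / p (n - 1 - j)%nat).
  { replace j with (n - (n - j))%nat at 1 by lia.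
    rewrite <- trajectory_u_reflect by lia.
    replace (n - j)%nat with (S (n - 1 - j)) by lia.
    apply (trajectory_u_succ T); lia. }
  pose proof (trajectory_p_gt0 T (n - 1 - j) ltac:(lia)).
  rewrite Hpj. field. lra.
Qed.

Lemma trajectory_p_ge1 j : (2 * j + 1 <= n)%nat -> 1 <= p j.
Proof.
  intros Hj.
  pose proof (trajectory_p_mul_reflect j ltac:(lia)).
  pose proof (trajectory_p_gt0 T (n - 1 - j) ltac:(lia)).
  pose proof (trajectory_p_le T j (n - 1 - j) ltac:(lia) ltac:(lia)).
  nra.
Qed.

Lemma trajectory_p_lt1 j : (n <= 2 * j)%nat -> (j <= n)%nat -> p j < 1.
Proof.
  intros Hj Hjn. destruct (Nat.eq_dec j n) as [->|Hne].
  - destruct T as [_ [Hp _]]. lra.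
  - pose proof (trajectory_p_mul_reflect j ltac:(lia)).
    pose proof (trajectory_p_gt0 T j ltac:(lia)).
    pose proof (trajectory_p_lt T (n - 1 - j) j ltac:(lia) ltac:(lia)).
    nra.
Qed.

End Reflection.

Theorem lemma5 (n : nat) (p u : nat -> R) :
  (1 <= n)%nat ->
  is_trajectory n p u ->
  (forall j : nat, (j <= n)%nat -> p j * u j < 1) /\
  (forall j : nat, (2 * j + 1 <= n)%nat -> 1 <= p j) /\
  (forall j : nat, (n + 1 <= 2 * j)%nat -> (j <= n)%nat -> 1 <= u j) /\
  (forall j : nat, (2 * j <= n)%nat -> u j < 1) /\
  (forall j : nat, (n <= 2 * j)%nat -> (j <= n)%nat -> p j < 1).
Proof.
  intros Hn T. split; [|split; [|split; [|split]]].
  - exact (trajectory_pu_lt1 T).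
  - exact (trajectory_p_ge1 Hn T).
  - intros j Hj Hjn. rewrite (trajectory_u_reflect Hn T) by exact Hjn.
    apply (trajectory_p_ge1 Hn T); lia.
  - intros j Hj. rewrite (trajectory_u_reflect Hn T) by lia.
    apply (trajectory_p_lt1 Hn T); lia.
  - exact (trajectory_p_lt1 Hn T).
Qed.
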